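(* Suppose there are real numbers $a_k,b_k$, $k\in\{1,\dots,m\}$, such that $g(x)=\min_{k\in[m]}\{a_k+b_kx\}$ for all $x\in[0,1]$. Then $\sup_{\mathbf x\in[0,1]^c}\mathcal R(\mathbf x)$ equals the optimal value of the linear program $$\max_{\pi\ge 0,\ (g_j)_{j=1}^c}\ \sum_{j=1}^c\lambda g_j\quad\text{s.t.}\quad g_j\le a_k\pi_j+b_k\frac{c-j+1}{\lambda d}\pi_{j-1}\ \ \forall k\in[m],\,j\in[c];\qquad \pi_j\ge \frac{c-j+1}{\lambda d}\pi_{j-1}\ \ \forall j\in[c];\qquad \sum_{j=0}^c\pi_j=1 .$$
   Context: Setting. Fix $c\in\mathbb N$ (number of identical units of a single reusable resource), an arrival rate $\lambda>0$ and a mean usage duration $d>0$, with $x^*:=c/(\lambda d)\in(0,1)$. Let $g:[0,1]\to\mathbb R$ be concave, non-decreasing, with $g(0)=0$ (the reward function). A stock-dependent policy is a vector $\mathbf x=(x_1,\dots,x_c)\in[0,1]^c$, where $x_j$ is the admission probability used when exactly $j$ units are available (the admission probability is $0$ when no unit is available). Its steady-state distribution is the unique probability vector $\pi=(\pi_0,\dots,\pi_c)$ satisfying $\pi_j\lambda x_j=\pi_{j-1}(c-j+1)/d$ for all $j\in\{1,\dots,c\}$, and its long-run average reward is $\mathcal R(\mathbf x)=\sum_{j=1}^c\pi_j\lambda g(x_j)$. *)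

From HB Require Import structures.
From mathcomp Require Import all_boot all_order all_algebra.
From mathcomp Require Import all_classical all_reals.
Set Implicit Arguments. Unset Strict Implicit. Unset Printing Implicit Defensive.
Import Order.TTheory GRing.Theory Num.Theory.
Local Open Scope ring_scope.
Local Open Scope classical_set_scope.

Section Defs.
Variable R : realType.

Definition concave01 (g : R -> R) : Prop :=
  forall x y t : R, 0 <= x <= 1 -> 0 <= y <= 1 -> 0 <= t <= 1 ->
    t * g x + (1 - t) * g y <= g (t * x + (1 - t) * y).

Definition nondecr01 (g : R -> R) : Prop :=
  forall x y : R, 0 <= x -> x <= y -> y <= 1 -> g x <= g y.

Definition policy (c : nat) (x : nat -> R) : Prop :=
  forall j : nat, (1 <= j <= c)%N -> 0 <= x j <= 1.

Definition steady_state (c : nat) (lam d : R) (x pi : nat -> R) : Prop :=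
  [/\ forall j : nat, (j <= c)%N -> 0 <= pi j,
      \sum_(0 <= j < c.+1) pi j = 1
    & forall j : nat, (1 <= j <= c)%N ->
        pi j * lam * x j = pi j.-1 * (c - j).+1%:R / d].

Definition avg_reward (c : nat) (lam : R) (g : R -> R) (x pi : nat -> R) : R :=
  \sum_(1 <= j < c.+1) pi j * lam * g (x j).

Definition reward_set (c : nat) (lam d : R) (g : R -> R) : set R :=
  [set r | exists x pi : nat -> R,
     [/\ policy c x, steady_state c lam d x pi & r = avg_reward c lam g x pi]].

Definition lp_feasible (c m : nat) (lam d : R) (a b : 'I_m -> R)
  (pi gg : nat -> R) : Prop :=
  [/\ forall j : nat, (j <= c)%N -> 0 <= pi j,
      forall (k : 'I_m) (j : nat), (1 <= j <= c)%N ->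
        gg j <= a k * pi j + b k * ((c - j).+1%:R / (lam * d)) * pi j.-1,
      forall j : nat, (1 <= j <= c)%N ->
        (c - j).+1%:R / (lam * d) * pi j.-1 <= pi j
    & \sum_(0 <= j < c.+1) pi j = 1].

Definition lp_objective (c : nat) (lam : R) (gg : nat -> R) : R :=
  \sum_(1 <= j < c.+1) lam * gg j.

End Defs.

From HB Require Import structures.
From mathcomp Require Import all_boot all_order all_algebra.
From mathcomp Require Import all_classical all_reals all_analysis.
From mathcomp Require Import ring.
Import numFieldNormedType.Exports.
Import Order.TTheory GRing.Theory Num.Theory.
Local Open Scope ring_scope.
Local Open Scope classical_set_scope.

(* Write t_j = (c-j+1)/(lam d), so that the balance equations of
   a policy x with steady state pi read t_j pi_{j-1} = pi_j x_j.
   (1) A policy x with steady state pi gives the LP point (pi, pi_j g(x_j)):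
       it is feasible (g <= a_k + b_k x and x_j <= 1) with objective R(x).
   (2) Conversely an LP point (pi, gg) gives the policy x_j = t_j pi_{j-1}/pi_j
       (x_j = 0 when pi_j = 0, which forces pi_{j-1} = 0); pi is its steady
       state and, since g(x_j) = a_k + b_k x_j for some k, pi_j g(x_j) >= gg_j.
   (3) The LP attains its maximum: for fixed pi the best choice of gg_j is the
       minimum over k of the right-hand sides, a continuous function of pi,
       and the feasible pi form a nonempty compact set (a closed subset of
       the box [0,1]^nat, compact by Tychonoff).
   By (1) the LP optimum bounds every R(x); by (2) it is itself bounded by
   some R(x); hence it equals the supremum. *)

Section RealValuedMaps.
Variables (R : realType) (T : topologicalType).

Lemma continuous_bigmin (I : Type) (r : seq I) (h0 : T -> R) (F : I -> T -> R) :
  continuous h0 -> (forall i, continuous (F i)) ->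
  continuous (fun p => \big[Num.min/h0 p]_(i <- r) F i p).
Proof.
move=> ch0 cF; elim: r => [|i r IH].
  by under eq_fun do rewrite big_nil.
under eq_fun do rewrite big_cons.
by move=> p; apply: continuous_min; [exact: cF | exact: IH].
Qed.

Lemma continuous_scale (u : R) (f : T -> R) :
  continuous f -> continuous (fun p => u * f p).
Proof. by move=> cf p; apply: continuousM; [exact: cst_continuous | exact: cf]. Qed.

Lemma closed_le_continuous (f h : T -> R) :
  continuous f -> continuous h -> closed [set p | f p <= h p].
Proof.
move=> cf ch.
have -> : [set p | f p <= h p] = (fun p => f p - h p) @^-1` [set x | x <= 0].
  by apply/seteqP; split => p /=; rewrite subr_le0.
apply: preimage_closed => [p _|]; last exact: closed_le.
exact: (continuousB (cf p) (ch p)).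
Qed.

Lemma closed_eq_continuous (f : T -> R) (y : R) :
  continuous f -> closed [set p | f p = y].
Proof.
move=> cf; apply: (@preimage_closed _ _ f [set x | x = y]) => [p _|].
  exact: cf.
exact: closed_eq.
Qed.

End RealValuedMaps.

Import ArrowAsProduct.

Lemma continuous_coord (R : realType) (i : nat) :
  continuous (fun p : {ptws nat -> R} => p i).
Proof. exact: (@proj_continuous nat (fun _ => R) i). Qed.

Lemma compact_unit_box (R : realType) :
  compact [set p : {ptws nat -> R} | forall i, `[(0:R), 1] (p i)].
Proof.
apply: (@tychonoff nat (fun _ => R) (fun _ => `[(0:R), 1]%classic)) => _.
exact: segment_compact.
Qed.

Lemma prob_entry_le1 {R : realFieldType} {c : nat} {p : nat -> R} {i : nat} :
  (forall j, (j <= c)%N -> 0 <= p j) -> \sum_(0 <= j < c.+1) p j = 1 ->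
  (i <= c)%N -> p i <= 1.
Proof.
move=> p0 psum ic.
have range_uniq : uniq (index_iota 0 c.+1) by exact: iota_uniq.
rewrite -psum (bigD1_seq i) ?mem_index_iota ?ltnS //=.
rewrite lerDl big_seq_cond; apply: sumr_ge0 => j /andP[jc _].
by apply: p0; move: jc; rewrite mem_index_iota ltnS.
Qed.

Section LinearProgram.
Context {R : realType} {c : nat} {lam d : R} {m : nat} {a b : 'I_m -> R}.
Hypotheses (lam_gt0 : 0 < lam) (d_gt0 : 0 < d).

(* Normalized departure rate t_j = (c-j+1)/(lam d) when j units are free. *)
Definition flow (j : nat) : R := (c - j).+1%:R / (lam * d).

Lemma flow_gt0 (j : nat) : 0 < flow j.
Proof. by rewrite divr_gt0 ?ltr0Sn ?mulr_gt0. Qed.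

Definition lp_rhs (p : nat -> R) (k : 'I_m) (j : nat) : R :=
  a k * p j + b k * flow j * p j.-1.

Lemma le_pred_of_range (j : nat) : (1 <= j <= c)%N -> (j.-1 <= c)%N.
Proof. by case/andP=> _ jc; apply: leq_trans jc; exact: leq_pred. Qed.

Lemma balance_flow (x pi : nat -> R) (j : nat) :
  pi j * lam * x j = pi j.-1 * (c - j).+1%:R / d ->
  flow j * pi j.-1 = pi j * x j.
Proof.
have lam_neq0 : lam != 0 by rewrite gt_eqF.
have d_neq0 : d != 0 by rewrite gt_eqF.
move=> balance; apply: (mulfI lam_neq0).
transitivity (pi j * lam * x j); last by ring.
by rewrite balance /flow; field; rewrite d_neq0 lam_neq0.
Qed.

Lemma policy_lp_point {g : R -> R} {x pi : nat -> R} :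
  (forall y, 0 <= y <= 1 -> forall k, g y <= a k + b k * y) ->
  policy c x -> steady_state c lam d x pi ->
  lp_feasible c lam d a b pi (fun j => pi j * g (x j)) /\
  lp_objective c lam (fun j => pi j * g (x j)) = avg_reward c lam g x pi.
Proof.
move=> g_le x01 [pi_ge0 pi_sum balance].
have flowE j : (1 <= j <= c)%N -> flow j * pi j.-1 = pi j * x j.
  by move=> jc; apply: balance_flow; exact: balance.
split; last by apply: eq_bigr => j _; ring.
split=> // [k j jc|j jc].
  have pij_ge0 : 0 <= pi j by apply: pi_ge0; case/andP: jc.
  rewrite -/(flow j) -mulrA flowE // [a k * _]mulrC mulrCA -mulrDr.
  by rewrite ler_wpM2l // g_le // x01.
have pij_ge0 : 0 <= pi j by apply: pi_ge0; case/andP: jc.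
by rewrite -/(flow j) flowE // ler_piMr //; case/andP: (x01 j jc).
Qed.

(* The admission probabilities which make pi a steady state. *)
Definition lp_policy (pi : nat -> R) (j : nat) : R :=
  if pi j == 0 then 0 else flow j * pi j.-1 / pi j.

Section FromLPPoints.
Context [pi gg : nat -> R].
Hypothesis feas : lp_feasible c lam d a b pi gg.

Lemma lp_pred_eq0 (j : nat) : (1 <= j <= c)%N -> pi j = 0 -> pi j.-1 = 0.
Proof.
case: feas => pi_ge0 _ flow_le _ jc pij0.
have := flow_le j jc; rewrite pij0 pmulr_rle0 ?flow_gt0 // => le0.
by apply: le_anti; rewrite le0 pi_ge0 // le_pred_of_range.
Qed.

(* lp_policy pi is a policy: x_j <= 1 is the LP constraint t_j pi_{j-1} <= pi_j. *)
Lemma lp_policy_policy : policy c (lp_policy pi).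
Proof.
case: feas => pi_ge0 _ flow_le _ j jc; rewrite /lp_policy.
have [//|pij_neq0] := eqVneq (pi j) 0; first by rewrite lexx ler01.
have pij_gt0 : 0 < pi j by rewrite lt_def pij_neq0 pi_ge0 //; case/andP: jc.
have pij1_ge0 : 0 <= pi j.-1 by rewrite pi_ge0 // le_pred_of_range.
rewrite divr_ge0 ?(mulr_ge0 (ltW (flow_gt0 j)) pij1_ge0) ?(ltW pij_gt0) //=.
by rewrite ler_pdivrMr // mul1r flow_le.
Qed.

Lemma lp_policy_steady : steady_state c lam d (lp_policy pi) pi.
Proof.
case: feas => pi_ge0 _ _ pi_sum; split=> // j jc.
have lam_neq0 : lam != 0 by rewrite gt_eqF.
have d_neq0 : d != 0 by rewrite gt_eqF.
rewrite /lp_policy; have [pij0|pij_neq0] := eqVneq (pi j) 0.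
  by rewrite pij0 (lp_pred_eq0 j jc pij0) !mul0r.
by rewrite /flow; field; rewrite pij_neq0 d_neq0 lam_neq0.
Qed.

Lemma lp_policy_reward {g : R -> R} (k0 : 'I_m) :
  (forall y, 0 <= y <= 1 -> exists k, g y = a k + b k * y) ->
  lp_objective c lam gg <= avg_reward c lam g (lp_policy pi) pi.
Proof.
case: feas => _ gg_le _ _ g_attained.
apply: ler_sum_nat => j /andP[j_ge1 j_lt]; have jc : (1 <= j <= c)%N.
  by rewrite j_ge1 -ltnS.
rewrite [pi j * lam]mulrC -mulrA ler_wpM2l ?(ltW lam_gt0) //.
rewrite /lp_policy; have [pij0|pij_neq0] := eqVneq (pi j) 0.
  by have := gg_le k0 j jc; rewrite pij0 (lp_pred_eq0 j jc pij0) !mulr0 addr0 mul0r.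
have := lp_policy_policy j jc; rewrite /lp_policy (negPf pij_neq0) => x01.
have [k ->] := g_attained _ x01; apply: le_trans (gg_le k j jc) _.
by rewrite -/(flow j) le_eqVlt; apply/predU1P; left; field.
Qed.

Lemma lp_point_policy {g : R -> R} (k0 : 'I_m) :
  (forall y, 0 <= y <= 1 -> exists k, g y = a k + b k * y) ->
  exists x, [/\ policy c x, steady_state c lam d x pi &
    lp_objective c lam gg <= avg_reward c lam g x pi].
Proof.
move=> g_attained; exists (lp_policy pi).
by split; [exact: lp_policy_policy | exact: lp_policy_steady | exact: lp_policy_reward].
Qed.

End FromLPPoints.

Section Optimum.
Variable k0 : 'I_m.

Definition best_gain (p : nat -> R) (j : nat) : R :=
  \big[Num.min/lp_rhs p k0 j]_(k < m) lp_rhs p k j.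

Lemma best_gain_le (p : nat -> R) (k : 'I_m) (j : nat) :
  best_gain p j <= lp_rhs p k j.
Proof. by apply: ge_bigmin_seq; rewrite ?mem_index_enum. Qed.

Definition lp_region : set {ptws nat -> R} :=
  [set p | forall i, `[(0:R), 1] (p i)] `&`
  ([set p | forall j, (1 <= j <= c)%N -> flow j * p j.-1 <= p j] `&`
   [set p | \sum_(0 <= j < c.+1) p j = 1]).

Lemma continuous_lp_objective :
  continuous (fun p : {ptws nat -> R} => lp_objective c lam (best_gain p)).
Proof.
have rhs_cont (k : 'I_m) (j : nat) : continuous (fun p : {ptws nat -> R} => lp_rhs p k j).
  move=> p; apply: (continuousD (f := fun q : {ptws nat -> R} => a k * q j)
                                (g := fun q => b k * flow j * q j.-1));
  by apply: continuous_scale; exact: continuous_coord.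
apply: continuous_big => [|j _]; first exact: add_continuous.
by apply: continuous_scale; apply: continuous_bigmin => [|k]; exact: rhs_cont.
Qed.

Lemma compact_lp_region : compact lp_region.
Proof.
apply: compact_closedI; first exact: compact_unit_box.
have sum_cont : continuous (fun p : {ptws nat -> R} => \sum_(0 <= j < c.+1) p j).
  by apply: continuous_big => [|j _]; [exact: add_continuous | exact: continuous_coord].
apply: closedI; last exact: closed_eq_continuous sum_cont.
have -> : [set p : {ptws nat -> R} | forall j, (1 <= j <= c)%N ->
    flow j * p j.-1 <= p j] = \bigcap_(j in [set j | (1 <= j <= c)%N])
    [set p | flow j * p j.-1 <= p j].
  by apply/seteqP; split => p /= h j; [move=> /= /h | exact: h].
apply: closed_bigI => j _; apply: closed_le_continuous; last exact: continuous_coord.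
by apply: continuous_scale; exact: continuous_coord.
Qed.

Definition truncate (p : nat -> R) : {ptws nat -> R} :=
  fun i => if (i <= c)%N then p i else 0.

Lemma truncate_region {p gg : nat -> R} :
  lp_feasible c lam d a b p gg -> lp_region (truncate p).
Proof.
move=> [p_ge0 _ flow_le p_sum].
have sumE : \sum_(0 <= j < c.+1) truncate p j = 1.
  by rewrite -p_sum; apply: eq_big_nat => i /andP[_ ic]; rewrite /truncate -ltnS ic.
split; last split=> // j jc.
  move=> i; rewrite /= in_itv /= /truncate; case: ifP => ic.
    by rewrite p_ge0 // (prob_entry_le1 p_ge0 p_sum ic).
  by rewrite lexx ler01.
rewrite /truncate le_pred_of_range //; case/andP: (jc) => _ ->; exact: flow_le.
Qed.

Lemma region_lp_feasible (p : {ptws nat -> R}) :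
  lp_region p -> lp_feasible c lam d a b p (best_gain p).
Proof.
move=> [p01 [flow_le p_sum]]; split=> //; last by move=> k j _; exact: best_gain_le.
by move=> j _; case/andP: (p01 j).
Qed.

Lemma lp_objective_le_best {p gg : nat -> R} :
  lp_feasible c lam d a b p gg ->
  lp_objective c lam gg <= lp_objective c lam (best_gain (truncate p)).
Proof.
move=> [_ gg_le _ _]; apply: ler_sum_nat => j /andP[j_ge1 j_lt].
have jc : (1 <= j <= c)%N by rewrite j_ge1 -ltnS.
rewrite ler_wpM2l ?(ltW lam_gt0) //; apply: le_bigmin => [|k _];
by rewrite /lp_rhs /truncate le_pred_of_range // -ltnS j_lt gg_le.
Qed.

Lemma lp_optimum_attained : exists pi gg,
  lp_feasible c lam d a b pi gg /\
  forall pi' gg', lp_feasible c lam d a b pi' gg' ->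
    lp_objective c lam gg' <= lp_objective c lam gg.
Proof.
have region_nonempty : lp_region !=set0.
  pose full (j : nat) : R := (j == c)%:R.
  exists (truncate full); apply: (@truncate_region full (best_gain full)).
  split=> [j _|k j _|j /andP[j_ge1 jc]|].
  - exact: ler0n.
  - exact: best_gain_le.
  - by rewrite /full (_ : (j.-1 == c) = false) ?mulr0 ?ler0n // ltn_eqF // prednK.
  - by rewrite big_nat_recr //= /full eqxx big1_seq ?add0r // => i /andP[_];
      rewrite mem_index_iota => /andP[_ /ltn_eqF ->].
have objective_cont : {within lp_region,
    continuous (fun p : {ptws nat -> R} => lp_objective c lam (best_gain p))}.
  exact: continuous_subspaceT continuous_lp_objective.
have [p p_region p_max] :=
  compact_EVT_max region_nonempty compact_lp_region objective_cont.
exists p, (best_gain p); split.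
  by apply: region_lp_feasible; move: p_region; rewrite inE.
move=> pi' gg' feas'; apply: le_trans (lp_objective_le_best feas') _.
by apply: p_max; rewrite inE; exact: (truncate_region feas').
Qed.

End Optimum.

End LinearProgram.

Theorem theorem1 (R : realType) (c : nat) (lam d : R) (g : R -> R)
  (m : nat) (a b : 'I_m -> R) :
  (0 < c)%N -> 0 < lam -> 0 < d ->
  0 < c%:R / (lam * d) < 1 ->
  concave01 g -> nondecr01 g -> g 0 = 0 ->
  (forall x : R, 0 <= x <= 1 ->
     (forall k : 'I_m, g x <= a k + b k * x) /\
     (exists k : 'I_m, g x = a k + b k * x)) ->
  (* the LP optimum exists and equals sup_x R(x) *)
  (exists pi gg : nat -> R,
     lp_feasible c lam d a b pi gg /\
     lp_objective c lam gg = sup (reward_set c lam d g)) /\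
  (forall pi gg : nat -> R, lp_feasible c lam d a b pi gg ->
     lp_objective c lam gg <= sup (reward_set c lam d g)).
Proof.
move=> _ lam_gt0 d_gt0 _ _ _ _ g_affine.
have zero01 : 0 <= (0 : R) <= 1 by rewrite lexx ler01.
(* the family of affine pieces is nonempty *)
have [_ [k0 _]] := g_affine 0 zero01.
have g_le y y01 := (g_affine y y01).1.
have g_attained y y01 := (g_affine y y01).2.
have [pi [gg [feas gg_max]]] :=
  lp_optimum_attained (c := c) (d := d) (a := a) (b := b) lam_gt0 k0.
set opt := lp_objective c lam gg.
have opt_ub : ubound (reward_set c lam d g) opt.
  move=> _ [x [pi' [x01 steady ->]]].
  have [feas' <-] := policy_lp_point lam_gt0 d_gt0 g_le x01 steady.
  exact: gg_max feas'.
have [x [x01 steady opt_le]] := lp_point_policy lam_gt0 d_gt0 feas k0 g_attained.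
have reward_in : reward_set c lam d g (avg_reward c lam g x pi) by exists x, pi.
have sup_opt : sup (reward_set c lam d g) = opt.
  apply: le_anti; rewrite ge_sup //=; last by eexists; exact: reward_in.
  apply: le_trans opt_le _; apply: sup_upper_bound => //.
  by split; [eexists; exact: reward_in | exists opt].
by rewrite sup_opt; split; [exists pi, gg | exact: gg_max].
Qed.
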